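(* Let $D\ge 2$, $\eta=\mathrm{diag}(-1,1,\dots,1)$, and let $M$ be an arbitrary invertible real $D\times D$ matrix. If the matrix $\eta M^t\eta M$ has no (real) negative eigenvalues, then $M$ can be written as $M=\lambda s$ with $\lambda$ a real Lorentz matrix (i.e. $\lambda^t\eta\lambda=\eta$) and $s$ a real symmetric matrix.
   Context: $m^t$ denotes the transpose of the matrix $m$. *)

From HB Require Import structures.
From mathcomp Require Import all_boot all_order all_algebra.
From mathcomp Require Import reals.
Set Implicit Arguments. Unset Strict Implicit. Unset Printing Implicit Defensive.
Import Order.TTheory GRing.Theory Num.Theory.
Local Open Scope ring_scope.

Definition eta_mx (R : numDomainType) (D : nat) : 'M[R]_D :=
  \matrix_(i < D, j < D) (if i == j then (if val i == 0%N then -1 else 1) else 0).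

Definition lorentz_mx (R : numDomainType) (D : nat) (L : 'M[R]_D) : Prop :=
  L^T *m eta_mx R D *m L = eta_mx R D.

From HB Require Import structures.
From mathcomp Require Import all_boot all_order all_algebra.
From mathcomp Require Import reals complex.
From mathcomp Require Import ring.
Set Implicit Arguments. Unset Strict Implicit. Unset Printing Implicit Defensive.
Import Order.TTheory GRing.Theory Num.Theory.
Local Open Scope ring_scope.

(* Let A := eta M^T eta M. Since eta A = M^T eta M is symmetric, A is
   self-adjoint for the form eta (A^T eta = eta A), and so is every polynomial
   in A. As A is invertible with no negative eigenvalue, no complex eigenvalue
   of A lies on ]-oo, 0]; there the principal square root sqrtc is nonzero and
   commutes with conjugation. Lifting it root by root (a Newton step at repeated
   roots) gives q with char_poly A | q^2 - X; its conjugate is another such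
   lift with the same values, hence congruent to q, so q may be taken real.
   By Cayley-Hamilton X := q(A) squares to A, S := eta X is symmetric with
   S eta S = M^T eta M, and L := M S^-1 is Lorentz. *)

Section SqrtXModProdXsubC.

Variables (F : fieldType) (rs : seq F) (f : F -> F).
Hypothesis two_neq0 : (2%:R : F) != 0.

Local Notation m := (\prod_(z <- rs) ('X - z%:P)).

Lemma sqrtX_mod_prod_XsubC :
  (forall z, z \in rs -> f z ^+ 2 = z /\ f z != 0) ->
  exists q : {poly F}, m %| q ^+ 2 - 'X /\ {in rs, forall z, q.[z] = f z}.
Proof.
elim: rs => [|a l IH] f_sqrt.
  by exists 0; rewrite big_nil dvd1p; split=> // z; rewrite in_nil.
have [|q [dvd_l q_l]] := IH.
  by move=> z zl; apply: f_sqrt; rewrite inE zl orbT.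
set ml := \prod_(z <- l) ('X - z%:P) in dvd_l.
have ml_neq0 : ml != 0 by rewrite monic_neq0 // monic_prod_XsubC.
have [fa2 fa_neq0] := f_sqrt a (mem_head _ _).
set h := (q ^+ 2 - 'X) %/ ml.
have Eh : q ^+ 2 - 'X = h * ml by rewrite divpK.
have Eha : q.[a] ^+ 2 - a = h.[a] * ml.[a].
  by have := congr1 (horner^~ a) Eh; rewrite !hornerE.
have a_in_l : ml.[a] = 0 -> a \in l.
  by move=> mla0; rewrite -root_prod_XsubC rootE mla0.
(* Adding a multiple of [ml] keeps the values on [l]; if [a] is already a root
   of [ml], the coefficient is a Newton step making [X - a] divide once more. *)
pose c := if ml.[a] == 0 then - h.[a] / (2%:R * q.[a]) else (f a - q.[a]) / ml.[a].
exists (q + c%:P * ml); split.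
  rewrite big_cons.
  have -> : (q + c%:P * ml) ^+ 2 - 'X
      = (q ^+ 2 - 'X) + (2%:R * c%:P * q + c%:P ^+ 2 * ml) * ml by ring.
  rewrite Eh -mulrDl dvdp_mul2r // dvdp_XsubCl rootE !hornerE; apply/eqP.
  rewrite /c; have [mla0|mla_neq0] := eqVneq ml.[a] 0.
    have qa_neq0 : q.[a] != 0 by rewrite q_l // a_in_l.
    by rewrite mla0 /=; field; rewrite qa_neq0.
  have -> /= : h.[a] = (q.[a] ^+ 2 - f a ^+ 2) / ml.[a].
    by rewrite fa2 Eha mulfK.
  by field.
move=> z; rewrite inE => /predU1P [->|zl].
  rewrite !hornerE /c; have [mla0|mla_neq0] := eqVneq ml.[a] 0.
    by rewrite mla0 mulr0 addr0 q_l // a_in_l.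
  by rewrite divfK // addrC subrK.
have : root ml z by rewrite root_prod_XsubC.
by rewrite rootE => /eqP mlz; rewrite !hornerE mlz mulr0 addr0 q_l.
Qed.

Lemma sqrtX_mod_prod_XsubC_uniq q1 q2 :
  (forall z, z \in rs -> f z != 0) ->
  m %| q1 ^+ 2 - 'X -> m %| q2 ^+ 2 - 'X ->
  {in rs, forall z, q1.[z] = f z} -> {in rs, forall z, q2.[z] = f z} ->
  m %| q1 - q2.
Proof.
move=> f_neq0 dvd1 dvd2 q1_rs q2_rs.
(* [q1 + q2] takes the value [2 f z != 0] at every root of [m]. *)
have cop : coprimep m (q1 + q2).
  elim: rs f_neq0 q1_rs q2_rs {dvd1 dvd2} => [|a l IH] f_neq0 q1_rs q2_rs.
    by rewrite big_nil coprime1p.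
  rewrite big_cons coprimepMl; apply/andP; split.
    rewrite coprimep_sym coprimep_XsubC rootE hornerD q1_rs ?q2_rs ?mem_head //.
    by rewrite -mulr2n -mulr_natl mulf_neq0 // f_neq0 // mem_head.
  by apply: IH => z zl; [apply: f_neq0|apply: q1_rs|apply: q2_rs];
     rewrite inE zl orbT.
rewrite -(Gauss_dvdpl _ cop).
have -> : (q1 - q2) * (q1 + q2) = (q1 ^+ 2 - 'X) - (q2 ^+ 2 - 'X) by ring.
exact: dvdp_sub.
Qed.

End SqrtXModProdXsubC.

Section ComplexifiedRoots.

Variable R : rcfType.

Local Notation toC := (map_poly (real_complex R)).

Lemma sqrtc_conj (z : R[i]) :
  (complex.Im z != 0) || (0 <= complex.Re z) -> sqrtc (conjc z) = conjc (sqrtc z).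
Proof.
case: z => a b /=; rewrite /sqrtc /conjc /= sqrrN oppr_eq0.
have [->|b_neq0] /= := eqVneq b 0; last by rewrite sgrN mulNr.
move=> a_ge0; rewrite expr0n /= addr0 sqrtr_sqr ger0_norm // subrr mul0r.
by rewrite sqrtr0 mulr0 oppr0.
Qed.

Lemma root_complex_char_poly_not_nonpos n (A : 'M[R]_n) (z : R[i]) :
  A \in unitmx -> ~ (exists a, a < 0 /\ eigenvalue A a) ->
  root (toC (char_poly A)) z -> (complex.Im z != 0) || (0 < complex.Re z).
Proof.
move=> A_unit no_neg; case: z => a b /=.
have [-> /=|//] := eqVneq b 0.
rewrite complexr0 fmorph_root -eigenvalue_root_char => eig_a.
case: (ltrgtP a 0) => [a_lt0|//|a0]; first by case: no_neg; exists a.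
move: eig_a; rewrite a0 => /eigenvalueP [v]; rewrite scale0r => vA0.
by rewrite -[v](mulmxK A_unit) vA0 mul0mx eqxx.
Qed.

Lemma real_sqrtX_mod (p : {poly R}) (q : {poly R[i]}) :
  toC p %| q ^+ 2 - 'X -> toC p %| q - map_poly conjc q ->
  exists r : {poly R}, p %| r ^+ 2 - 'X.
Proof.
move=> dvd_sq dvd_conj; set qb := map_poly conjc q in dvd_conj.
(* The real part of [q] is [q - (q - qb) / 2], which is [q] modulo [toC p]. *)
exists (\poly_(i < size q) complex.Re q`_i).
have Re_q : toC (\poly_(i < size q) complex.Re q`_i) = q - 2^-1%:P * (q - qb).
  apply/polyP => i; rewrite coef_map coef_poly coefB coefCM coefB coef_map /=.
  case: ltnP => [_|q_le_i]; first by rewrite ReJ_add; field.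
  rewrite nth_default // (rmorph0 (@conjc R)) !subrr mulr0 subrr.
  exact: (rmorph0 (real_complex R)).
rewrite -(dvdp_map (real_complex R)) rmorphB /= rmorphXn /= map_polyX Re_q.
set k := 2^-1%:P.
have -> : (q - k * (q - qb)) ^+ 2 - 'X
    = (q ^+ 2 - 'X) - (q - qb) * (k * (2%:R * q - k * (q - qb))) by ring.
by rewrite dvdp_sub // dvdp_mulr.
Qed.

Lemma exists_sqrtX_mod_char_poly n (A : 'M[R]_n) :
  A \in unitmx -> ~ (exists a, a < 0 /\ eigenvalue A a) ->
  exists r : {poly R}, char_poly A %| r ^+ 2 - 'X.
Proof.
move=> A_unit no_neg; set p := toC (char_poly A).
have [rs Ep] := closed_field_poly_normal p.
rewrite (monicP _) ?map_monic ?char_poly_monic // scale1r in Ep.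
have root_p z : (z \in rs) = root p z by rewrite Ep root_prod_XsubC.
have not_nonpos z : z \in rs -> (complex.Im z != 0) || (0 < complex.Re z).
  by rewrite root_p; apply: root_complex_char_poly_not_nonpos.
have sqrtc_rs z : z \in rs -> sqrtc z ^+ 2 = z /\ sqrtc z != 0.
  move=> /not_nonpos z_ok; rewrite sqr_sqrtc sqrtc_eq0; split=> //.
  by apply: contraL z_ok => /eqP ->; rewrite /= eqxx ltxx.
have two_neq0 : (2%:R : R[i]) != 0 by rewrite pnatr_eq0.
have [q [dvd_q q_rs]] := sqrtX_mod_prod_XsubC two_neq0 sqrtc_rs.
have conj_p : map_poly conjc p = p.
  by rewrite /p -map_poly_comp; apply: eq_map_poly => x /=; apply: conjc_real.
set qb := map_poly conjc q.
have dvd_qb : \prod_(z <- rs) ('X - z%:P) %| qb ^+ 2 - 'X.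
  by rewrite -Ep -conj_p -(map_polyX conjc) -rmorphXn -rmorphB dvdp_map Ep.
have qb_rs : {in rs, forall z, qb.[z] = sqrtc z}.
  move=> z z_rs; rewrite -{1}[z]conjcK horner_map /= q_rs; last first.
    by rewrite root_p -conj_p fmorph_root -root_p.
  rewrite sqrtc_conj ?conjcK //.
  by have /orP[->|/ltW->] := not_nonpos z z_rs; rewrite ?orbT.
have sqrtc_neq0 z : z \in rs -> sqrtc z != 0 by move=> /sqrtc_rs[].
apply: (@real_sqrtX_mod _ q); rewrite -/p Ep; first exact: dvd_q.
by apply: (sqrtX_mod_prod_XsubC_uniq two_neq0 sqrtc_neq0 dvd_q dvd_qb q_rs).
Qed.

End ComplexifiedRoots.

Lemma horner_mx_sqr_char_poly_dvd (F : fieldType) n (A : 'M[F]_n.+1) r :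
  char_poly A %| r ^+ 2 - 'X -> horner_mx A r ^+ 2 = A.
Proof.
move=> dvd_r; apply/eqP; rewrite -subr_eq0.
rewrite -[A in _ - A]horner_mx_X -rmorphXn -rmorphB /= -(divpK dvd_r).
by rewrite rmorphM /= Cayley_Hamilton mulr0.
Qed.

Lemma horner_mx_sqrt (R : rcfType) n (A : 'M[R]_n.+1) :
  A \in unitmx -> ~ (exists a, a < 0 /\ eigenvalue A a) ->
  exists r : {poly R}, horner_mx A r ^+ 2 = A.
Proof.
move=> A_unit no_neg; have [r dvd_r] := exists_sqrtX_mod_char_poly A_unit no_neg.
by exists r; apply: horner_mx_sqr_char_poly_dvd.
Qed.

Lemma horner_mx_trmx_twist (R : comNzRingType) n (A E : 'M[R]_n.+1) p :
  A^T *m E = E *m A -> (horner_mx A p)^T *m E = E *m horner_mx A p.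
Proof.
move=> AE; elim/poly_ind: p => [|p c IH].
  by rewrite rmorph0 trmx0 mul0mx mulmx0.
have pA_A : horner_mx A p *m A = A *m horner_mx A p.
  exact: (comm_horner_mx p (erefl : comm_mx A A)).
rewrite rmorphD rmorphM /= horner_mx_X horner_mx_C -[_ * A]/(_ *m A).
rewrite linearD /= trmx_mul tr_scalar_mx mulmxDl mulmxDr -mulmxA IH.
by rewrite (mulmxA A^T) AE -!mulmxA pA_A scalar_mxC.
Qed.

Lemma tr_eta_mx (R : numDomainType) D : (eta_mx R D)^T = eta_mx R D.
Proof. by apply/matrixP => i j; rewrite !mxE eq_sym; case: eqVneq => // ->. Qed.

Lemma eta_mx_invol (R : numDomainType) D : eta_mx R D *m eta_mx R D = 1%:M.
Proof.
apply/matrixP => i j; rewrite !mxE (bigD1 i) //= big1 => [|k k_neq_i]; last first.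
  by rewrite mxE eq_sym (negbTE k_neq_i) mul0r.
rewrite addr0 !mxE eqxx; case: (eqVneq i j) => [->|]; rewrite ?mulr0 //.
by case: (val j == 0%N); rewrite ?mulrNN mulr1.
Qed.

Lemma twisted_polar_decomposition (R : rcfType) n (E M : 'M[R]_n.+1) :
  E^T = E -> E *m E = 1%:M -> M \in unitmx ->
  ~ (exists a, a < 0 /\ eigenvalue (E *m M^T *m E *m M) a) ->
  exists L S, L^T *m E *m L = E /\ S^T = S /\ M = L *m S.
Proof.
move=> E_sym E_invol M_unit; set A := E *m M^T *m E *m M => no_neg.
have E_unit : E \in unitmx by case: (mulmx1_unit E_invol).
have EA : E *m A = M^T *m E *m M by rewrite /A !mulmxA E_invol mul1mx.
have A_twist : A^T *m E = E *m A.
  by rewrite EA /A !trmx_mul trmxK E_sym -!mulmxA E_invol mulmx1 !mulmxA.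
have A_unit : A \in unitmx by rewrite !unitmx_mul E_unit unitmx_tr M_unit.
have [r Er] := horner_mx_sqrt A_unit no_neg; set X := horner_mx A r in Er.
have X_unit : X \in unitmx by move: A_unit; rewrite -Er unitmx_mul => /andP[].
set S := E *m X.
have S_sym : S^T = S by rewrite trmx_mul E_sym horner_mx_trmx_twist.
have S_unit : S \in unitmx by rewrite unitmx_mul E_unit X_unit.
have SES : S *m E *m S = M^T *m E *m M.
  by rewrite -EA -Er /S -!mulmxA (mulmxA E E) E_invol mul1mx expr2.
exists (M *m invmx S), S; split; last by split=> //; rewrite mulmxKV.
rewrite trmx_mul trmx_inv S_sym -!mulmxA (mulmxA M^T) (mulmxA _ M) -SES.
by rewrite (mulmxK S_unit) (mulKmx S_unit).
Qed.

Theorem proposition4 (R : realType) (D : nat) (M : 'M[R]_D) :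
  (2 <= D)%N ->
  M \in unitmx ->
  ~ (exists a : R, a < 0 /\ eigenvalue (eta_mx R D *m M^T *m eta_mx R D *m M) a) ->
  exists (L S : 'M[R]_D), lorentz_mx L /\ S^T = S /\ M = L *m S.
Proof.
case: D M => // n M _ M_unit no_neg.
exact: twisted_polar_decomposition (tr_eta_mx R n.+1) (eta_mx_invol R n.+1) M_unit no_neg.
Qed.
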